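(* For any positive integer $D$ there are no points ${\bf p}_1,\dots,{\bf p}_6\in\mathbb R^D$ such that $|{\bf p}_i-{\bf p}_{i+1}|\le 1$ and $|{\bf p}_i-{\bf p}_{i+3}|>2$ for all $i$, indices taken modulo $6$. *)

From Stdlib Require Import Reals Lra Lia.
Open Scope R_scope.

(* A point of R^D is represented by its coordinate function; only the
   coordinates 0 .. D-1 are relevant. *)
Definition point := nat -> R.

Fixpoint sqdist (D : nat) (p q : point) : R :=
  match D with
  | O => 0
  | S D' => sqdist D' p q + (p D' - q D') ^ 2
  end.

Definition edist (D : nat) (p q : point) : R := sqrt (sqdist D p q).

From Stdlib Require Import Reals Lra Lia Psatz.
Open Scope R_scope.

(* The squared diagonals of any closed hexagon are bounded by twice its squared
   sides, coordinatewise by a sum-of-squares identity and hence in every R^D.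
   Sides of length at most 1 give a squared-diagonal sum of at most 12, while
   diagonals longer than 2 give more than 12. *)

Lemma hexagon_diagonals_sq_le (x0 x1 x2 x3 x4 x5 : R) :
  (x0 - x3)^2 + (x1 - x4)^2 + (x2 - x5)^2 <=
  2 * ((x0 - x1)^2 + (x1 - x2)^2 + (x2 - x3)^2
       + (x3 - x4)^2 + (x4 - x5)^2 + (x5 - x0)^2).
Proof.
assert (sos :
  2 * ((x0 - x1)^2 + (x1 - x2)^2 + (x2 - x3)^2
       + (x3 - x4)^2 + (x4 - x5)^2 + (x5 - x0)^2)
  - ((x0 - x3)^2 + (x1 - x4)^2 + (x2 - x5)^2)
  = (x0 - x1 + x3 - x4)^2 + (x1 - x2 + x4 - x5)^2 + (x2 - x3 + x5 - x0)^2
    + (x0 - x1 + x2 - x3 + x4 - x5)^2) by ring.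
pose proof (pow2_ge_0 (x0 - x1 + x3 - x4)).
pose proof (pow2_ge_0 (x1 - x2 + x4 - x5)).
pose proof (pow2_ge_0 (x2 - x3 + x5 - x0)).
pose proof (pow2_ge_0 (x0 - x1 + x2 - x3 + x4 - x5)).
lra.
Qed.

Lemma sqdist_hexagon_diagonals_le (D : nat) (p0 p1 p2 p3 p4 p5 : point) :
  sqdist D p0 p3 + sqdist D p1 p4 + sqdist D p2 p5 <=
  2 * (sqdist D p0 p1 + sqdist D p1 p2 + sqdist D p2 p3
       + sqdist D p3 p4 + sqdist D p4 p5 + sqdist D p5 p0).
Proof.
induction D as [|D IH]; simpl; [lra|].
pose proof (hexagon_diagonals_sq_le (p0 D) (p1 D) (p2 D) (p3 D) (p4 D) (p5 D)).
lra.
Qed.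

Lemma sqdist_ge0 (D : nat) (p q : point) : 0 <= sqdist D p q.
Proof.
induction D as [|D IH]; simpl; [lra|].
pose proof (pow2_ge_0 (p D - q D)); lra.
Qed.

Lemma sqdist_le_sq (D : nat) (p q : point) (r : R) :
  0 <= r -> edist D p q <= r -> sqdist D p q <= r^2.
Proof.
unfold edist; intros r_ge0 le_r.
rewrite <- (sqrt_def (sqdist D p q)) by apply sqdist_ge0.
pose proof (sqrt_pos (sqdist D p q)); nra.
Qed.

Lemma sqdist_gt_sq (D : nat) (p q : point) (r : R) :
  0 <= r -> r < edist D p q -> r^2 < sqdist D p q.
Proof.
unfold edist; intros r_ge0 gt_r.
rewrite <- (sqrt_def (sqdist D p q)) by apply sqdist_ge0.
nra.
Qed.

Theorem mainTheorem13 (D : nat) (HD : (0 < D)%nat) :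
  ~ exists P : nat -> point,
      forall i : nat, (i < 6)%nat ->
        edist D (P i) (P ((i + 1) mod 6)%nat) <= 1 /\
        edist D (P i) (P ((i + 3) mod 6)%nat) > 2.
Proof.
intros [P HP].
destruct (HP 0%nat ltac:(lia)) as [s0 d0].
destruct (HP 1%nat ltac:(lia)) as [s1 d1].
destruct (HP 2%nat ltac:(lia)) as [s2 d2].
destruct (HP 3%nat ltac:(lia)) as [s3 _].
destruct (HP 4%nat ltac:(lia)) as [s4 _].
destruct (HP 5%nat ltac:(lia)) as [s5 _].
simpl in *.
apply sqdist_le_sq in s0, s1, s2, s3, s4, s5; try lra.
apply sqdist_gt_sq in d0, d1, d2; try lra.
pose proof (sqdist_hexagon_diagonals_le D (P 0%nat) (P 1%nat) (P 2%nat)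
              (P 3%nat) (P 4%nat) (P 5%nat)).
lra.
Qed.
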